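(* Let $M$ be a complete $\mathrm{CAT}(0)$ space, $\mathcal{C}$ a collection of closed convex subspaces such that $(M,\mathcal{C})$ is a $(\nu,\phi)$--relatively hyperbolic pair. Put $\nu'=4\nu+2\phi(\nu)$, $\nu''=4\nu+2\phi(\nu')$, $\Delta(\nu,\phi)=\nu'+\nu''$. Let $Z\in\mathcal{C}$, $\pi_Z\colon M\to Z$ the closest point projection, $a,b\in M$, and $Q$ the geodesic quadrilateral with vertices $\pi_Z(a),a,b,\pi_Z(b)$. Then either $d(\pi_Z(a),\pi_Z(b))\le\phi(\nu')+2\nu+3\nu'$ or $Q$ is $\Delta(\nu,\phi)$--slim.
   Context: For a geodesic triangle with comparison-tripod map $\pi$: it is $\nu$--thin if all fibers of $\pi$ have diameter $\le\nu$; it is $\nu$--thin relative to $U$ if it is not $\nu$--thin and every fiber either has diameter $\le\nu$ or lies in $N_\nu(U)$. $(M,\mathcal{U})$ has $\nu$--relatively thin triangles if every geodesic triangle is $\nu$--thin or $\nu$--thin relative to some $U\in\mathcal{U}$. $(M,\mathcal{U})$ is a $(\nu,\phi)$--relatively hyperbolic pair ($\phi\colon\mathbb{R}_{\ge0}\to\mathbb{R}_{\ge0}$) if it has $\nu$--relatively thin triangles and $\operatorname{diam}(N_r(F_1)\cap N_r(F_2))\le\phi(r)$ for all $r\ge0$ and distinct $F_1,F_2\in\mathcal{U}$. A polygon is $\mu$--slim if each side lies in the $\mu$--neighborhood of the union of the other sides. *)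

From Stdlib Require Export Reals.
From Stdlib Require Import Lra.
Set Implicit Arguments.
Open Scope R_scope.

Section Defs.
Variable M : Type.
Variable d : M -> M -> R.

Definition is_metric : Prop :=
  (forall x y, 0 <= d x y) /\ (forall x y, d x y = 0 <-> x = y) /\
  (forall x y, d x y = d y x) /\ (forall x y z, d x z <= d x y + d y z).

Definition converges (u : nat -> M) (l : M) : Prop :=
  forall eps, 0 < eps -> exists N, forall n, (N <= n)%nat -> d (u n) l < eps.

Definition cauchy (u : nat -> M) : Prop :=
  forall eps, 0 < eps -> exists N, forall m n, (N <= m)%nat -> (N <= n)%nat ->
    d (u m) (u n) < eps.

Definition complete_metric : Prop := forall u, cauchy u -> exists l, converges u l.

Definition geodesic (g : R -> M) (x y : M) : Prop :=
  g 0 = x /\ g (d x y) = y /\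
  forall s t, 0 <= s <= d x y -> 0 <= t <= d x y -> d (g s) (g t) = Rabs (s - t).

Definition on_seg (g : R -> M) (x y : M) (p : M) : Prop :=
  exists t, 0 <= t <= d x y /\ p = g t.

(** CAT(0): geodesic space in which, for every geodesic triangle with vertex x
    and sides g1 = [x,y], g2 = [x,z], the distance between the point at
    fraction lam of [x,y] and the point at fraction mu of [x,z] is at most the
    distance between the corresponding points of the Euclidean comparison
    triangle (x̄ = 0, |ȳ| = a, |z̄| = b, |ȳ - z̄| = c), i.e.
    |lam ȳ - mu z̄|^2 = lam^2 a^2 + mu^2 b^2 - lam mu (a^2 + b^2 - c^2).
    Every pair of points of a geodesic triangle lies on two sides sharing a
    vertex (or on one side), so this is the CAT(0) inequality. *)
Definition CAT0 : Prop :=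
  (forall x y, exists g, geodesic g x y) /\
  forall x y z g1 g2 lam mu,
    geodesic g1 x y -> geodesic g2 x z -> 0 <= lam <= 1 -> 0 <= mu <= 1 ->
    let a := d x y in let b := d x z in let c := d y z in
    (d (g1 (lam * a)) (g2 (mu * b)))^2 <=
      lam^2 * a^2 + mu^2 * b^2 - lam * mu * (a^2 + b^2 - c^2).

Definition closed_sub (U : M -> Prop) : Prop :=
  forall u l, (forall n, U (u n)) -> converges u l -> U l.

Definition convex_sub (U : M -> Prop) : Prop :=
  forall x y g, U x -> U y -> geodesic g x y ->
    forall t, 0 <= t <= d x y -> U (g t).

Definition nbhd (r : R) (U : M -> Prop) (p : M) : Prop :=
  exists u, U u /\ d p u <= r.

Definition is_proj (Z : M -> Prop) (piZ : M -> M) : Prop :=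
  forall x, Z (piZ x) /\ forall z, Z z -> d x (piZ x) <= d x z.

Inductive idx3 := I0 | I1 | I2.
Definition next (i : idx3) : idx3 := match i with I0 => I1 | I1 => I2 | I2 => I0 end.
Definition prev (i : idx3) : idx3 := match i with I0 => I2 | I1 => I0 | I2 => I1 end.

Definition is_triangle (V : idx3 -> M) (G : idx3 -> R -> M) : Prop :=
  forall i, geodesic (G i) (V i) (V (next i)).

Section Tri.

Variable V : idx3 -> M.
Definition len (i : idx3) : R := d (V i) (V (next i)).
(** Gromov product at vertex V i = length of leg i of the comparison tripod *)
Definition gprod (i : idx3) : R := (len i + len (prev i) - len (next i)) / 2.

(** Comparison tripod map: the point at parameter s of side i goes to the
    point on leg (fst) of the tripod at distance (snd) from the centre. *)
Definition tripod (i : idx3) (s : R) : idx3 * R :=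
  if Rle_dec s (gprod i) then (i, gprod i - s) else (next i, s - gprod i).

Definition same_tripod_pt (p q : idx3 * R) : Prop :=
  snd p = snd q /\ (snd p = 0 \/ fst p = fst q).

Variable G : idx3 -> R -> M.

Definition in_fiber (tp : idx3 * R) (p : M) : Prop :=
  exists j t, 0 <= t <= len j /\ p = G j t /\ same_tripod_pt (tripod j t) tp.

Definition fiber_diam_le (nu : R) (i : idx3) (s : R) : Prop :=
  forall p q, in_fiber (tripod i s) p -> in_fiber (tripod i s) q -> d p q <= nu.

Definition fiber_in (nu : R) (U : M -> Prop) (i : idx3) (s : R) : Prop :=
  forall p, in_fiber (tripod i s) p -> nbhd nu U p.

Definition thin (nu : R) : Prop :=
  forall i s, 0 <= s <= len i -> fiber_diam_le nu i s.

Definition thin_rel (nu : R) (U : M -> Prop) : Prop :=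
  ~ thin nu /\
  forall i s, 0 <= s <= len i -> fiber_diam_le nu i s \/ fiber_in nu U i s.
End Tri.

Definition rel_thin_triangles (C : (M -> Prop) -> Prop) (nu : R) : Prop :=
  forall V G, is_triangle V G -> thin V G nu \/ exists U, C U /\ thin_rel V G nu U.

Definition rel_hyp_pair (C : (M -> Prop) -> Prop) (nu : R) (phi : R -> R) : Prop :=
  rel_thin_triangles C nu /\
  forall r F1 F2, 0 <= r -> C F1 -> C F2 -> ~ (forall x, F1 x <-> F2 x) ->
    forall x y, nbhd r F1 x -> nbhd r F2 x -> nbhd r F1 y -> nbhd r F2 y ->
      d x y <= phi r.

Definition quad_slim (mu : R) (x0 x1 x2 x3 : M) (g0 g1 g2 g3 : R -> M) : Prop :=
  let S0 := on_seg g0 x0 x1 in let S1 := on_seg g1 x1 x2 in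
  let S2 := on_seg g2 x2 x3 in let S3 := on_seg g3 x3 x0 in
  (forall p, S0 p -> nbhd mu (fun q => S1 q \/ S2 q \/ S3 q) p) /\
  (forall p, S1 p -> nbhd mu (fun q => S0 q \/ S2 q \/ S3 q) p) /\
  (forall p, S2 p -> nbhd mu (fun q => S0 q \/ S1 q \/ S3 q) p) /\
  (forall p, S3 p -> nbhd mu (fun q => S0 q \/ S1 q \/ S2 q) p).
End Defs.

Definition nu_prime (nu : R) (phi : R -> R) : R := 4 * nu + 2 * phi nu.
Definition nu_dprime (nu : R) (phi : R -> R) : R := 4 * nu + 2 * phi (nu_prime nu phi).
Definition Delta (nu : R) (phi : R -> R) : R := nu_prime nu phi + nu_dprime nu phi.

(** Let [p = pi a], [q = pi b] be the projections of [a], [b] to [Z ∈ C] and put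
    [kappa = min(phi nu, phi nu')], a bound for the diameter of [N_nu(U) ∩ N_nu(Z)]
    when [U ≠ Z].  If [d p q > 3 nu + 6 kappa] (implied by the failure of the first
    alternative), both [p] and [q] lie within [3 nu + 4 kappa <= Delta] of [[a, b]];
    by convexity of the distance in CAT(0) spaces the quadrilateral is then slim.

    To find a point of [[a, b]] near [p], choose [h = [p, b]] and read relative
    thinness on the corners of the triangles [q p b] and [p a b].  The key metric
    fact is that a point of [[pi x, x]] at distance [s] from [pi x] is [s]-far from
    [Z].  In [q p b] this makes the corner at [q] short and keeps [h] near [Z] off a
    parameter set of spread [kappa]; in [p a b] it then makes the corner at [p] short,
    and just past that corner a point of [[p, a]] or of [h] is [nu]-close to [[a, b]]. *)
From Stdlib Require Import Lra Psatz Classical.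
Open Scope R_scope.

Section MetricGeodesics.
Context {M : Type} {d : M -> M -> R} (Hm : is_metric d).

Lemma d_nonneg x y : 0 <= d x y.
Proof. destruct Hm as [H _]; apply H. Qed.

Lemma d_refl x : d x x = 0.
Proof. destruct Hm as [_ [H _]]; apply H; reflexivity. Qed.

Lemma d_sym x y : d x y = d y x.
Proof. destruct Hm as [_ [_ [H _]]]; apply H. Qed.

Lemma d_tri x y z : d x z <= d x y + d y z.
Proof. destruct Hm as [_ [_ [_ H]]]; apply H. Qed.

Lemma nbhd_weaken r r' (U U' : M -> Prop) x :
  r <= r' -> (forall y, U y -> U' y) -> nbhd d r U x -> nbhd d r' U' x.
Proof. intros Hr HU [u [Hu Hd]]; exists u; split; [apply HU, Hu | lra]. Qed.

Lemma nbhd_self r (U : M -> Prop) x : 0 <= r -> U x -> nbhd d r U x.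
Proof. intros Hr Hx; exists x; rewrite d_refl; auto. Qed.

Lemma nbhd_step r r' (U : M -> Prop) x y :
  d x y <= r -> nbhd d r' U y -> nbhd d (r + r') U x.
Proof.
  intros Hxy [u [Hu Hyu]]; exists u; split; auto.
  pose proof (d_tri x y u); lra.
Qed.

Lemma geo_dist {g x y s t} : geodesic d g x y ->
  0 <= s <= d x y -> 0 <= t <= d x y -> d (g s) (g t) = Rabs (s - t).
Proof. intros [_ [_ H]]; apply H. Qed.

Lemma geo_from {g x y t} : geodesic d g x y -> 0 <= t <= d x y -> d x (g t) = t.
Proof.
  intros Hg Ht; pose proof (d_nonneg x y).
  pose proof Hg as [H0 _]; rewrite <- H0 at 1.
  rewrite (geo_dist Hg) by lra; rewrite Rabs_left1; lra.
Qed.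

Lemma geo_to {g x y t} : geodesic d g x y -> 0 <= t <= d x y -> d (g t) y = d x y - t.
Proof.
  intros Hg Ht; pose proof (d_nonneg x y).
  pose proof Hg as [_ [H1 _]]; rewrite <- H1 at 1.
  rewrite (geo_dist Hg) by lra; rewrite Rabs_left1; lra.
Qed.

Lemma rev_geo {g x y} : geodesic d g x y -> geodesic d (fun t => g (d x y - t)) y x.
Proof.
  intros [H0 [H1 H]]; unfold geodesic; rewrite (d_sym y x); split; [|split].
  - now rewrite Rminus_0_r.
  - now rewrite Rminus_diag.
  - intros s t Hs Ht; rewrite H by lra; rewrite Rabs_minus_sym; f_equal; ring.
Qed.

Lemma sub_fwd {g x y t1 t2} : geodesic d g x y -> 0 <= t1 -> t1 <= t2 -> t2 <= d x y ->
  geodesic d (fun u => g (t1 + u)) (g t1) (g t2) /\ d (g t1) (g t2) = t2 - t1.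
Proof.
  intros Hg H1 H12 H2.
  assert (E : d (g t1) (g t2) = t2 - t1)
    by (rewrite (geo_dist Hg) by lra; rewrite Rabs_left1; lra).
  split; auto; unfold geodesic; rewrite E; split; [|split].
  - f_equal; ring.
  - f_equal; ring.
  - intros s t Hs Ht; rewrite (geo_dist Hg) by lra; f_equal; ring.
Qed.

Lemma sub_bwd {g x y t1 t2} : geodesic d g x y -> 0 <= t1 -> t1 <= t2 -> t2 <= d x y ->
  geodesic d (fun u => g (t2 - u)) (g t2) (g t1) /\ d (g t2) (g t1) = t2 - t1.
Proof.
  intros Hg H1 H12 H2.
  assert (E : d (g t2) (g t1) = t2 - t1)
    by (rewrite (geo_dist Hg) by lra; rewrite Rabs_right; lra).
  split; auto; unfold geodesic; rewrite E; split; [|split].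
  - f_equal; ring.
  - f_equal; ring.
  - intros s t Hs Ht; rewrite (geo_dist Hg) by lra.
    rewrite <- Rabs_Ropp; f_equal; ring.
Qed.

Lemma geo_between {g x y r1 r2} : geodesic d g x y ->
  0 <= r1 <= d x y -> 0 <= r2 <= d x y ->
  exists k, geodesic d k (g r1) (g r2) /\
    forall w, 0 <= w <= d (g r1) (g r2) -> on_seg d g x y (k w).
Proof.
  intros Hg Hr1 Hr2; destruct (Rle_dec r1 r2) as [H12 | H21].
  - destruct (sub_fwd (t1 := r1) (t2 := r2) Hg) as [Hk Hlen]; try lra.
    exists (fun u => g (r1 + u)); split; auto.
    intros w Hw; exists (r1 + w); split; [lra | reflexivity].
  - destruct (sub_bwd (t1 := r2) (t2 := r1) Hg) as [Hk Hlen]; try lra.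
    exists (fun u => g (r1 - u)); split; auto.
    intros w Hw; exists (r1 - w); split; [lra | reflexivity].
Qed.

End MetricGeodesics.

Section Convexity.
Context {M : Type} {d : M -> M -> R} (Hm : is_metric d) (Hc : CAT0 d).

Lemma cat0_cone {g1 g2 x y z} lam : geodesic d g1 x y -> geodesic d g2 x z ->
  0 <= lam <= 1 -> d (g1 (lam * d x y)) (g2 (lam * d x z)) <= lam * d y z.
Proof.
  intros H1 H2 Hl; destruct Hc as [_ Hcat].
  pose proof (Hcat x y z g1 g2 lam lam H1 H2 Hl Hl) as H; simpl in H.
  pose proof (d_nonneg Hm (g1 (lam * d x y)) (g2 (lam * d x z))).
  pose proof (d_nonneg Hm y z).
  set (X := d (g1 (lam * d x y)) (g2 (lam * d x z))) in *.
  assert (X ^ 2 <= (lam * d y z) ^ 2) by nra.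
  assert (0 <= lam * d y z) by nra.
  destruct (Rle_dec X (lam * d y z)) as [|Hn]; auto.
  assert (lam * d y z * (lam * d y z) < X * X) by (apply Rmult_le_0_lt_compat; lra).
  nra.
Qed.

(** Convexity of the distance: if the endpoints of two geodesics are [r]-close,
    every point of the first is [r]-close to some point of the second.  Compare
    through the diagonal geodesic [x, y']. *)
Lemma convex_dist {g g' x y x' y'} r s : geodesic d g x y -> geodesic d g' x' y' ->
  d x x' <= r -> d y y' <= r -> 0 <= s <= d x y ->
  exists s', 0 <= s' <= d x' y' /\ d (g s) (g' s') <= r.
Proof.
  intros Hg Hg' Hx Hy Hs.
  pose proof (d_nonneg Hm x y); pose proof (d_nonneg Hm x' y');
    pose proof (d_nonneg Hm x y').
  destruct (Req_dec (d x y) 0) as [L0 | L0].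
  - exists 0; split; [lra|].
    replace s with 0 by lra; destruct Hg as [-> _]; destruct Hg' as [-> _]; auto.
  - set (lam := s / d x y).
    assert (Es : lam * d x y = s) by (unfold lam; field; auto).
    assert (Hl : 0 <= lam <= 1) by (split; nra).
    destruct Hc as [Hex _]; destruct (Hex x y') as [k Hk].
    exists (lam * d x' y'); split; [nra|].
    pose proof (cat0_cone lam Hg Hk Hl) as C1; rewrite Es in C1.
    pose proof (cat0_cone (1 - lam) (rev_geo Hm Hk) (rev_geo Hm Hg') ltac:(lra)) as C2.
    rewrite (d_sym Hm y' x), (d_sym Hm y' x') in C2.
    replace (d x y' - (1 - lam) * d x y') with (lam * d x y') in C2 by ring.
    replace (d x' y' - (1 - lam) * d x' y') with (lam * d x' y') in C2 by ring.
    pose proof (d_tri Hm (g s) (k (lam * d x y')) (g' (lam * d x' y'))); nra.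
Qed.

Lemma piece_near {g x y k u v} t1 t2 s r1 r2 c :
  geodesic d g x y -> geodesic d k u v ->
  0 <= t1 -> t1 <= s -> s <= t2 -> t2 <= d x y ->
  0 <= r1 <= d u v -> 0 <= r2 <= d u v ->
  d (g t1) (k r1) <= c -> d (g t2) (k r2) <= c ->
  nbhd d c (on_seg d k u v) (g s).
Proof.
  intros Hg Hk H1 H1s Hs2 H2 Hr1 Hr2 Hc1 Hc2.
  destruct (sub_fwd (t1 := t1) (t2 := t2) Hg) as [Hpiece Hlen]; try lra.
  destruct (geo_between Hk Hr1 Hr2) as [k' [Hk' Hon]].
  destruct (convex_dist c (s - t1) Hpiece Hk' Hc1 Hc2 ltac:(lra)) as [w [Hw Hd]].
  exists (k' w); split; [apply Hon, Hw|].
  replace s with (t1 + (s - t1)) by ring; exact Hd.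
Qed.

End Convexity.

Local Ltac endpoints :=
  repeat match goal with E : ?g ?t = _ |- context [?g ?t] => rewrite E end; auto.

Section SlimQuadrilateral.
Context {M : Type} {d : M -> M -> R} (Hm : is_metric d) (Hc : CAT0 d).

(** If the two vertices [p], [q] of a geodesic quadrilateral [p a b q] lie within [c]
    of the side [[a,b]], the quadrilateral is [D]-slim for every [D >= c]: each side
    is cut into pieces whose endpoints are [c]-close to another side. *)
Lemma quad_slim_of_near p a b q g0 g1 g2 g3 t1 t2 c D :
  geodesic d g0 p a -> geodesic d g1 a b -> geodesic d g2 b q -> geodesic d g3 q p ->
  0 <= t1 <= d a b -> 0 <= t2 <= d a b -> d p (g1 t1) <= c -> d q (g1 t2) <= c ->
  c <= D -> quad_slim d D p a b q g0 g1 g2 g3.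
Proof.
  intros H0 H1 H2 H3 Ht1 Ht2 Hp Hq HcD.
  pose proof H0 as [E0p [E0a _]]; pose proof H1 as [E1a [E1b _]];
    pose proof H2 as [E2b [E2q _]]; pose proof H3 as [E3q [E3p _]].
  pose proof (d_nonneg Hm p a); pose proof (d_nonneg Hm b q);
    pose proof (d_nonneg Hm q p).
  assert (Hc0 : 0 <= c) by (pose proof (d_nonneg Hm p (g1 t1)); lra).
  assert (Hself : forall x, d x x <= c) by (intros x; rewrite (d_refl Hm); lra).
  assert (Hp' : d (g1 t1) p <= c) by (rewrite (d_sym Hm); lra).
  assert (Hq' : d (g1 t2) q <= c) by (rewrite (d_sym Hm); lra).
  unfold quad_slim; cbv zeta; split; [|split; [|split]]; intros x [s [Hs ->]].
  - apply (nbhd_weaken c D (on_seg d g1 a b)); [lra | tauto |].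
    apply (piece_near Hm Hc 0 (d p a) s t1 0 c H0 H1); try lra; endpoints.
  - destruct (Rle_dec s t1) as [Hs1 | Hs1]; [|destruct (Rle_dec t2 s) as [Hs2 | Hs2]].
    + apply (nbhd_weaken c D (on_seg d g0 p a)); [lra | tauto |].
      apply (piece_near Hm Hc 0 t1 s (d p a) 0 c H1 H0); try lra; endpoints.
    + apply (nbhd_weaken c D (on_seg d g2 b q)); [lra | tauto |].
      apply (piece_near Hm Hc t2 (d a b) s (d b q) 0 c H1 H2); try lra; endpoints.
    + apply (nbhd_weaken c D (on_seg d g3 q p)); [lra | tauto |].
      apply (piece_near Hm Hc t1 t2 s (d q p) 0 c H1 H3); try lra; endpoints.
  - apply (nbhd_weaken c D (on_seg d g1 a b)); [lra | tauto |].
    apply (piece_near Hm Hc 0 (d b q) s (d a b) t2 c H2 H1); try lra; endpoints.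
  - apply (nbhd_weaken c D (on_seg d g1 a b)); [lra | tauto |].
    apply (piece_near Hm Hc 0 (d q p) s t2 t1 c H3 H1); try lra; endpoints.
Qed.

End SlimQuadrilateral.

Lemma clamp_lip L t t' : 0 <= L ->
  Rabs (Rmax 0 (Rmin L t) - Rmax 0 (Rmin L t')) <= Rabs (t - t').
Proof.
  intros HL; unfold Rmax, Rmin.
  repeat destruct Rle_dec; unfold Rabs; repeat destruct Rcase_abs; lra.
Qed.

Lemma lip_continuous (f : R -> R) c :
  (forall x y, Rabs (f x - f y) <= Rabs (x - y)) -> continuity_pt f c.
Proof.
  intros H eps Heps; exists eps; split; auto.
  intros x [_ Hx]; simpl in *; unfold R_dist in *; specialize (H x c); lra.
Qed.

(** The distance from a point to a geodesic segment is attained: the segment is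
    compact, since [t |-> d p (g t)] is 1-Lipschitz on [[0, d x y]]. *)
Lemma near_segment_closed {M} {d : M -> M -> R} (Hm : is_metric d) {g x y} p c :
  geodesic d g x y ->
  (forall eps, 0 < eps -> exists t, 0 <= t <= d x y /\ d p (g t) <= c + eps) ->
  exists t, 0 <= t <= d x y /\ d p (g t) <= c.
Proof.
  intros Hg H; pose proof (d_nonneg Hm x y) as HL; set (L := d x y) in *.
  set (cl := fun t => Rmax 0 (Rmin L t)).
  assert (Hcl : forall t, 0 <= t <= L -> cl t = t)
    by (intros t Ht; unfold cl, Rmax, Rmin; repeat destruct Rle_dec; lra).
  assert (Hrange : forall t, 0 <= cl t <= L)
    by (intros t; unfold cl, Rmax, Rmin; repeat destruct Rle_dec; lra).
  set (f := fun t => d p (g (cl t))).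
  assert (Hlip : forall t t', Rabs (f t - f t') <= Rabs (t - t')).
  { intros t t'; unfold f.
    pose proof (d_tri Hm p (g (cl t')) (g (cl t))).
    pose proof (d_tri Hm p (g (cl t)) (g (cl t'))).
    rewrite (geo_dist Hg (Hrange t') (Hrange t)) in *.
    rewrite (geo_dist Hg (Hrange t) (Hrange t')) in *.
    pose proof (clamp_lip L t t' HL); rewrite (Rabs_minus_sym (cl t')) in *.
    apply Rabs_le; fold (cl t) (cl t') in *; lra. }
  destruct (continuity_ab_min f 0 L HL (fun c0 _ => lip_continuous f c0 Hlip))
    as [m [Hmin Hm']].
  exists m; split; auto.
  destruct (Rle_dec (d p (g m)) c) as [|Hn]; auto.
  destruct (H ((d p (g m) - c) / 2)) as [t [Ht Hd]]; [lra|].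
  specialize (Hmin t Ht); unfold f in Hmin; rewrite !Hcl in Hmin by auto; lra.
Qed.

Definition spread_le (B : R -> Prop) (r : R) : Prop :=
  forall s s', B s -> B s' -> Rabs (s - s') <= r.

Lemma three_points (P F B : R -> Prop) r s1 s2 s3 : 0 <= r ->
  spread_le F r -> spread_le B r -> s2 - s1 > r -> s3 - s2 > r ->
  (P s1 \/ F s1 \/ B s1) -> (P s2 \/ F s2 \/ B s2) -> (P s3 \/ F s3 \/ B s3) ->
  P s1 \/ P s2 \/ P s3.
Proof.
  intros Hr HF HB h12 h23 H1 H2 H3.
  assert (A12 : Rabs (s1 - s2) > r) by (rewrite Rabs_minus_sym, Rabs_right; lra).
  assert (A23 : Rabs (s2 - s3) > r) by (rewrite Rabs_minus_sym, Rabs_right; lra).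
  assert (A13 : Rabs (s1 - s3) > r) by (rewrite Rabs_minus_sym, Rabs_right; lra).
  destruct H1 as [|[H1|H1]]; auto; destruct H2 as [|[H2|H2]]; auto;
    destruct H3 as [|[H3|H3]]; auto;
  first [ specialize (HF _ _ H1 H2) | specialize (HB _ _ H1 H2)
        | specialize (HF _ _ H1 H3) | specialize (HB _ _ H1 H3)
        | specialize (HF _ _ H2 H3) | specialize (HB _ _ H2 H3) ]; lra.
Qed.

Lemma interval_find (P F B : R -> Prop) r lo hi e : 0 <= r -> 0 < e ->
  spread_le F r -> spread_le B r ->
  (forall s, lo <= s <= hi -> P s \/ F s \/ B s) -> lo + 2 * r + e <= hi ->
  exists s, lo <= s <= lo + 2 * r + e /\ P s.
Proof.
  intros Hr He HF HB H Hh.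
  destruct (three_points P F B r lo (lo + r + e / 2) (lo + 2 * r + e))
    as [K|[K|K]]; auto; try lra; try (apply H; lra);
    eexists; split; [|exact K| |exact K| |exact K]; lra.
Qed.

Lemma interval_cover (F B : R -> Prop) r lo m : 0 <= r ->
  spread_le F r -> spread_le B r -> (forall s, lo < s <= m -> F s \/ B s) ->
  m <= lo + 2 * r.
Proof.
  intros Hr HF HB H; destruct (Rle_dec m (lo + 2 * r)) as [|Hn]; auto.
  set (e := (m - lo - 2 * r) / 2).
  destruct (interval_find (fun _ => False) F B r (lo + e) m e) as [s [_ []]];
    auto; unfold e in *; try lra.
  intros s Hs; right; apply H; lra.
Qed.

Definition gromov {M : Type} (d : M -> M -> R) (x y z : M) : R :=
  (d x y + d x z - d y z) / 2.

Section Tripods.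
Context {M : Type} {d : M -> M -> R} (Hm : is_metric d).

Lemma gromov_bounds x y z : 0 <= gromov d x y z <= d x y /\ gromov d x y z <= d x z.
Proof.
  pose proof (d_tri Hm x y z); pose proof (d_tri Hm y x z); pose proof (d_tri Hm x z y).
  rewrite (d_sym Hm y x) in *; rewrite (d_sym Hm z y) in *; unfold gromov; lra.
Qed.

Lemma gromov_comm x y z : gromov d x y z = gromov d x z y.
Proof. unfold gromov; rewrite (d_sym Hm z y); lra. Qed.

Lemma gromov_sum x y z : gromov d x y z + gromov d y x z = d x y.
Proof. unfold gromov; rewrite (d_sym Hm y x); lra. Qed.

Lemma next_prev i : next (prev i) = i.
Proof. destruct i; reflexivity. Qed.

Lemma gprod_bounds V i :
  0 <= gprod d V i <= len d V i /\ gprod d V i <= len d V (prev i).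
Proof.
  pose proof (d_tri Hm (V I0) (V I1) (V I2)); pose proof (d_tri Hm (V I1) (V I2) (V I0));
    pose proof (d_tri Hm (V I2) (V I0) (V I1)).
  pose proof (d_sym Hm (V I0) (V I1)); pose proof (d_sym Hm (V I1) (V I2));
    pose proof (d_sym Hm (V I2) (V I0)).
  destruct i; unfold gprod, len, prev, next; simpl; lra.
Qed.

(** Near vertex [i], the point at distance [t] on side [i] and the point at distance
    [t] (measured from the same vertex) on side [prev i] lie in one tripod fibre. *)
Lemma corner_fiber V G i t : 0 <= t <= gprod d V i ->
  in_fiber d V G (tripod d V i t) (G i t) /\
  in_fiber d V G (tripod d V i t) (G (prev i) (len d V (prev i) - t)).
Proof.
  intros Ht; destruct (gprod_bounds V i) as [[H0 H1] H2].
  assert (Etr : tripod d V i t = (i, gprod d V i - t))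
    by (unfold tripod; destruct Rle_dec; [reflexivity | lra]).
  assert (Gp : gprod d V (prev i) = len d V (prev i) - gprod d V i)
    by (destruct i; unfold gprod, len, prev, next; simpl; lra).
  split.
  - exists i, t; repeat split; try lra; auto.
  - exists (prev i), (len d V (prev i) - t); split; [lra|]; split; [reflexivity|].
    rewrite Etr; unfold tripod; destruct Rle_dec; unfold same_tripod_pt; simpl.
    + split; [lra | left; lra].
    + rewrite next_prev; split; [lra | right; reflexivity].
Qed.

End Tripods.

Section Corners.
Context {M : Type} (d : M -> M -> R) (Hm : is_metric d).
Variables (C : (M -> Prop) -> Prop) (nu : R) (Z : M -> Prop).
Hypothesis Hrt : rel_thin_triangles d C nu.

Definition other_piece (W : M -> Prop) : Prop := C W /\ ~ (forall x, W x <-> Z x).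

Definition close_or_near (W : M -> Prop) (u v : M) : Prop :=
  d u v <= nu \/ (nbhd d nu W u /\ nbhd d nu W v).

Definition corner (W : M -> Prop) (u v : R -> M) (G : R) : Prop :=
  forall t, 0 <= t <= G -> close_or_near W (u t) (v t).

(** Relative thinness, read on fibres over the legs of the tripod; a piece that is
    extensionally [Z] is replaced by [Z] itself, and a thin triangle uses [Z]. *)
Lemma triangle_pairs V G : is_triangle d V G ->
  exists W, (W = Z \/ other_piece W) /\
    forall i t, 0 <= t <= gprod d V i ->
      close_or_near W (G i t) (G (prev i) (len d V (prev i) - t)).
Proof.
  intros HT; destruct (Hrt V G HT) as [Hthin | [U [HU [_ Hrel]]]].
  - exists Z; split; [now left|]; intros i t Ht; left.
    destruct (gprod_bounds Hm V i) as [[? ?] ?].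
    destruct (corner_fiber Hm V G i t Ht) as [F1 F2].
    exact (Hthin i t ltac:(lra) _ _ F1 F2).
  - assert (Hpairs : forall i t, 0 <= t <= gprod d V i ->
              close_or_near U (G i t) (G (prev i) (len d V (prev i) - t))).
    { intros i t Ht; destruct (gprod_bounds Hm V i) as [[? ?] ?].
      destruct (corner_fiber Hm V G i t Ht) as [F1 F2].
      destruct (Hrel i t ltac:(lra)) as [A | A]; [left; exact (A _ _ F1 F2)|].
      right; split; [exact (A _ F1) | exact (A _ F2)]. }
    destruct (classic (forall x, U x <-> Z x)) as [Heq | Hneq].
    + exists Z; split; [now left|]; intros i t Ht.
      destruct (Hpairs i t Ht) as [|[N1 N2]]; [now left | right].
      split; apply (nbhd_weaken nu nu U); auto; try lra; intros; apply Heq; auto.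
    + exists U; split; [right; split; auto | exact Hpairs].
Qed.

Lemma triangle_corners x y z gxy gxz gyz :
  geodesic d gxy x y -> geodesic d gxz x z -> geodesic d gyz y z ->
  exists W, (W = Z \/ other_piece W) /\
    corner W gxy gxz (gromov d x y z) /\
    corner W (fun t => gxy (d x y - t)) gyz (gromov d y x z) /\
    corner W (fun t => gxz (d x z - t)) (fun t => gyz (d y z - t)) (gromov d z x y).
Proof.
  intros Hxy Hxz Hyz.
  set (V := fun i => match i with I0 => x | I1 => y | I2 => z end).
  set (G := fun i => match i with I0 => gxy | I1 => gyz | I2 => fun t => gxz (d x z - t) end).
  assert (HT : is_triangle d V G) by (intros []; simpl; auto; exact (rev_geo Hm Hxz)).
  destruct (triangle_pairs V G HT) as [W [HW Hp]]; exists W; split; auto.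
  pose proof (d_sym Hm x y); pose proof (d_sym Hm x z); pose proof (d_sym Hm y z).
  unfold gprod, len, gromov in *; split; [|split]; intros t Ht.
  - specialize (Hp I0 t); simpl in Hp.
    replace (d x z - (d z x - t)) with t in Hp by lra; apply Hp; lra.
  - specialize (Hp I1 t); simpl in Hp.
    destruct Hp as [Hp | [Hp1 Hp2]]; [lra|..].
    + left; rewrite (d_sym Hm); lra.
    + right; auto.
  - specialize (Hp I2 t); simpl in Hp; apply Hp; lra.
Qed.

End Corners.

(** [kappa = min(phi nu, phi nu')] bounds the diameter of [N_nu(U) ∩ N_nu(Z)] for
    distinct pieces: the hypothesis applies at radius [nu] and, since [N_nu] lies in
    [N_nu'], at radius [nu'] (no monotonicity of [phi] is assumed). *)
Definition isect_bound (nu : R) (phi : R -> R) : R := Rmin (phi nu) (phi (nu_prime nu phi)).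

Section Projection.
Context {M : Type} (d : M -> M -> R) (Hm : is_metric d) (Hc : CAT0 d).
Variables (C : (M -> Prop) -> Prop) (nu : R) (phi : R -> R) (Z : M -> Prop) (pi : M -> M).
Hypotheses (Hnu : 0 <= nu) (Hphi : forall r, 0 <= r -> 0 <= phi r)
  (Hrh : rel_hyp_pair d C nu phi) (HZ : C Z) (HconvZ : convex_sub d Z) (Hpi : is_proj d Z pi).

Local Notation kappa := (isect_bound nu phi).
Local Notation other := (other_piece C Z).

Lemma kappa_bounds : 0 <= kappa <= phi nu /\ kappa <= phi (nu_prime nu phi).
Proof.
  pose proof (Hphi nu Hnu).
  assert (0 <= nu_prime nu phi) by (unfold nu_prime; lra).
  pose proof (Hphi _ H0).
  unfold isect_bound; split; [split|]; [apply Rmin_glb; lra | apply Rmin_l | apply Rmin_r].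
Qed.

Lemma isect_small W x y : other W ->
  nbhd d nu W x -> nbhd d nu Z x -> nbhd d nu W y -> nbhd d nu Z y -> d x y <= kappa.
Proof.
  intros [HW Hne] Wx Zx Wy Zy; destruct Hrh as [_ Hdiam].
  assert (Hnu' : nu <= nu_prime nu phi) by (pose proof (Hphi nu Hnu); unfold nu_prime; lra).
  apply Rmin_glb; [exact (Hdiam nu W Z Hnu HW HZ Hne x y Wx Zx Wy Zy) |].
  assert (Hgrow : forall U u, nbhd d nu U u -> nbhd d (nu_prime nu phi) U u)
    by (intros U u; apply nbhd_weaken; auto).
  apply (Hdiam (nu_prime nu phi) W Z); auto; lra.
Qed.

Lemma isect_spread h x y W : geodesic d h x y ->
  spread_le (fun s => other W /\ 0 <= s <= d x y /\ nbhd d nu W (h s) /\ nbhd d nu Z (h s))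
    kappa.
Proof.
  intros Hh s s' [HW [Hs [Ws Zs]]] [_ [Hs' [Ws' Zs']]].
  rewrite <- (geo_dist Hh Hs Hs'); apply (isect_small W); auto.
Qed.

Lemma proj_far x g s r : geodesic d g (pi x) x -> 0 <= s <= d (pi x) x ->
  nbhd d r Z (g s) -> s <= r.
Proof.
  intros Hg Hs [z [Hz Hd]]; destruct (Hpi x) as [_ Hmin]; specialize (Hmin z Hz).
  pose proof (d_tri Hm x (g s) z); pose proof (geo_to Hm Hg Hs).
  rewrite (d_sym Hm x (g s)), (d_sym Hm x (pi x)) in *; lra.
Qed.

Lemma geo_in_Z {g x y} : geodesic d g x y -> Z x -> Z y ->
  forall t, 0 <= t <= d x y -> Z (g t).
Proof. intros Hg Hx Hy t Ht; exact (HconvZ x y g Hx Hy Hg t Ht). Qed.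

(** In a triangle [pi b, p, b] with [p ∈ Z], the corner at [pi b] is short: points
    of [[pi b, b]] beyond [nu] are far from [Z], so their partners on [[pi b, p]] ⊂ Z
    lie near another piece, and such points have spread at most [kappa]. *)
Lemma proj_corner_short b p g2 g3 W :
  geodesic d g2 b (pi b) -> geodesic d g3 (pi b) p -> Z p -> (W = Z \/ other W) ->
  corner d nu W g3 (fun t => g2 (d b (pi b) - t)) (gromov d (pi b) p b) ->
  gromov d (pi b) p b <= nu + 2 * kappa.
Proof.
  intros H2 H3 Hp HW Hcor.
  pose proof (geo_in_Z H3 (proj1 (Hpi b)) Hp) as Hin.
  destruct (gromov_bounds Hm (pi b) p b) as [[G0 G1] G2].
  pose proof kappa_bounds as [[K0 _] _].
  apply (interval_cover _ (fun _ => False) kappa nu _ K0 (isect_spread g3 _ _ W H3));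
    [intros ? ? [] |].
  intros t Ht; left.
  assert (Hfar : forall r, nbhd d r Z (g2 (d b (pi b) - t)) -> t <= r).
  { intros r; apply (proj_far b _ t r (rev_geo Hm H2)); lra. }
  destruct (Hcor t ltac:(lra)) as [Hclose | [N3 N2]].
  - exfalso; assert (t <= nu); [|lra].
    apply Hfar; exists (g3 t); split; [apply Hin; lra | rewrite (d_sym Hm); exact Hclose].
  - destruct HW as [-> | HW]; [apply Hfar in N2; lra|].
    refine (conj HW (conj _ (conj N3 _))); [lra | apply nbhd_self; auto; apply Hin; lra].
Qed.

(** In the same triangle, along [[p, b]] up to the corner at [p], points are near
    [Z] except on a parameter set of spread [kappa] (where their partners on
    [[p, pi b]] ⊂ Z lie near another piece). *)
Lemma proj_leg_near b p g3 h W :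
  geodesic d g3 (pi b) p -> Z p -> (W = Z \/ other W) ->
  corner d nu W (fun t => g3 (d (pi b) p - t)) h (gromov d p (pi b) b) ->
  exists B, spread_le B kappa /\
    forall s, 0 <= s <= gromov d p (pi b) b -> nbhd d nu Z (h s) \/ B s.
Proof.
  intros H3 Hp HW Hcor; pose proof (rev_geo Hm H3) as R3.
  pose proof (geo_in_Z R3 Hp (proj1 (Hpi b))) as Hin.
  exists (fun s => other W /\ 0 <= s <= d p (pi b) /\
            nbhd d nu W (g3 (d (pi b) p - s)) /\ nbhd d nu Z (g3 (d (pi b) p - s))).
  split; [exact (isect_spread _ _ _ W R3)|].
  intros s Hs; destruct (gromov_bounds Hm p (pi b) b) as [[G0 G1] G2].
  destruct (Hcor s Hs) as [Hclose | [N3 Nh]].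
  - left; exists (g3 (d (pi b) p - s)); split; [apply Hin; lra|].
    rewrite (d_sym Hm); exact Hclose.
  - destruct HW as [-> | HW]; [now left|].
    right; refine (conj HW (conj _ (conj N3 _))); [lra | apply nbhd_self; auto; apply Hin; lra].
Qed.

(** In a triangle [pi a, a, b], the corner at [pi a] is short, provided the side
    [h = [pi a, b]] stays near [Z] off a set of spread [kappa] on a long initial
    stretch: beyond [2 nu], a point of [h] near [Z] cannot be [nu]-close to its
    partner on [[pi a, a]], so both lie near another piece. *)
Lemma vertex_corner_short a b g0 h W B L :
  geodesic d g0 (pi a) a -> geodesic d h (pi a) b -> (W = Z \/ other W) ->
  corner d nu W g0 h (gromov d (pi a) a b) -> spread_le B kappa ->
  (forall s, 0 <= s <= L -> nbhd d nu Z (h s) \/ B s) -> 2 * nu + 2 * kappa < L ->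
  gromov d (pi a) a b <= 2 * nu + 2 * kappa.
Proof.
  intros H0 Hh HW Hcor HB Hcov HL.
  destruct (gromov_bounds Hm (pi a) a b) as [[G0 G1] G2].
  pose proof kappa_bounds as [[K0 _] _].
  assert (Hshort : Rmin (gromov d (pi a) a b) L <= 2 * nu + 2 * kappa).
  { apply (interval_cover _ B kappa (2 * nu) _ K0 (isect_spread h _ _ W Hh) HB).
    intros s Hs; pose proof (Rmin_l (gromov d (pi a) a b) L);
      pose proof (Rmin_r (gromov d (pi a) a b) L).
    assert (Hfar : forall r, nbhd d r Z (g0 s) -> s <= r)
      by (intros r; apply (proj_far a g0 s r H0); lra).
    destruct (Hcov s ltac:(lra)) as [NZ | HBs]; [left | now right].
    destruct (Hcor s ltac:(lra)) as [Hclose | [N0 Nh]].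
    - apply (nbhd_step Hm _ _ _ _ _ Hclose), Hfar in NZ; lra.
    - destruct HW as [-> | HW]; [apply Hfar in N0; lra|].
      refine (conj HW (conj _ (conj Nh NZ))); lra. }
  unfold Rmin in Hshort; destruct Rle_dec in Hshort; lra.
Qed.

(** If the corner at [pi a] of [pi a, a, b] is short and the piece is [Z] itself,
    a point of [[pi a, a]] just beyond the corner and beyond [nu] is far from [Z],
    hence [nu]-close to its partner on [[a, b]]. *)
Lemma near_via_a a b g0 g1 m : geodesic d g0 (pi a) a -> geodesic d g1 a b ->
  corner d nu Z (fun t => g0 (d (pi a) a - t)) g1 (gromov d a (pi a) b) ->
  gromov d (pi a) a b <= m -> nu <= m ->
  forall eps, 0 < eps -> exists t, 0 <= t <= d a b /\ d (pi a) (g1 t) <= m + nu + eps.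
Proof.
  intros H0 H1 Hcor Hm1 Hm2 eps Heps.
  pose proof (gromov_sum Hm (pi a) a b); pose proof (gromov_bounds Hm a (pi a) b).
  set (s := Rmax (gromov d (pi a) a b) (nu + eps / 2)).
  assert (Hs : gromov d (pi a) a b <= s /\ nu + eps / 2 <= s /\ s <= m + eps / 2)
    by (unfold s, Rmax; destruct Rle_dec; lra).
  destruct (Rle_dec s (d (pi a) a)) as [Hsa | Hsa].
  - exists (d (pi a) a - s); split; [lra|].
    destruct (Hcor (d (pi a) a - s) ltac:(lra)) as [Hclose | [N0 _]];
      replace (d (pi a) a - (d (pi a) a - s)) with s in * by ring.
    + pose proof (d_tri Hm (pi a) (g0 s) (g1 (d (pi a) a - s))).
      rewrite (geo_from Hm H0) in * by lra; lra.
    + apply (proj_far a g0 s nu H0) in N0; lra.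
  - exists 0; pose proof (d_nonneg Hm a b); split; [lra|].
    destruct H1 as [-> _]; lra.
Qed.

(** If the piece of [pi a, a, b] is another piece, follow [h = [pi a, b]] past the
    corner at [pi a]: on the corner at [b], each point of [h] is [nu]-close to a
    point of [[a, b]], or near both pieces, or in the exceptional set [B]; both
    exceptions have spread [kappa], so a good point appears within [2 kappa + e]. *)
Lemma near_via_b a b g1 h W B L e : geodesic d g1 a b -> geodesic d h (pi a) b ->
  other W ->
  corner d nu W (fun t => h (d (pi a) b - t)) (fun t => g1 (d a b - t)) (gromov d b (pi a) a) ->
  spread_le B kappa -> (forall s, 0 <= s <= L -> nbhd d nu Z (h s) \/ B s) ->
  L <= d (pi a) b -> 0 < e -> gromov d (pi a) a b + 2 * kappa + e <= L ->
  exists t, 0 <= t <= d a b /\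
    d (pi a) (g1 t) <= gromov d (pi a) a b + 2 * kappa + e + nu.
Proof.
  intros H1 Hh HW Hcor HB Hcov HLb He HL.
  pose proof kappa_bounds as [[K0 _] _].
  pose proof (gromov_comm Hm (pi a) a b); pose proof (gromov_sum Hm (pi a) b a).
  pose proof (gromov_bounds Hm (pi a) a b); pose proof (gromov_bounds Hm b (pi a) a).
  pose proof (d_sym Hm b a).
  destruct (interval_find (fun s => exists t, 0 <= t <= d a b /\ d (pi a) (g1 t) <= s + nu)
              _ B kappa (gromov d (pi a) a b) L e K0 He (isect_spread h _ _ W Hh) HB)
    as [s [Hs [t Ht]]];
    [| lra | exists t; lra].
  intros s Hs.
  destruct (Hcor (d (pi a) b - s) ltac:(lra)) as [Hclose | [Nh _]];
    replace (d (pi a) b - (d (pi a) b - s)) with s in * by ring.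
  - left; exists (d a b - (d (pi a) b - s)); split; [lra|].
    pose proof (d_tri Hm (pi a) (h s) (g1 (d a b - (d (pi a) b - s)))).
    rewrite (geo_from Hm Hh) in * by lra; lra.
  - right; destruct (Hcov s ltac:(lra)) as [NZ | HBs]; [left | now right].
    refine (conj HW (conj _ (conj Nh NZ))); lra.
Qed.

Lemma proj_near_geodesic a b g0 g1 g2 g3 :
  geodesic d g0 (pi a) a -> geodesic d g1 a b -> geodesic d g2 b (pi b) ->
  geodesic d g3 (pi b) (pi a) -> 3 * nu + 6 * kappa < d (pi a) (pi b) ->
  exists t, 0 <= t <= d a b /\ d (pi a) (g1 t) <= 3 * nu + 4 * kappa.
Proof.
  intros H0 H1 H2 H3 Hfar.
  pose proof kappa_bounds as [[K0 _] _].
  pose proof (proj1 (Hpi a)) as Zpa.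
  destruct Hc as [Hex _]; destruct (Hex (pi a) b) as [h Hh].
  destruct (triangle_corners d Hm C nu Z (proj1 Hrh) _ _ _ g3 _ h H3 (rev_geo Hm H2) Hh)
    as [W2 [HW2 [Cq [Cp _]]]].
  pose proof (proj_corner_short b (pi a) g2 g3 W2 H2 H3 Zpa HW2 Cq) as Hq.
  destruct (proj_leg_near b (pi a) g3 h W2 H3 Zpa HW2 Cp) as [B [HB Hcov]].
  pose proof (gromov_sum Hm (pi b) (pi a) b); pose proof (d_sym Hm (pi a) (pi b)).
  pose proof (gromov_bounds Hm (pi a) (pi b) b).
  set (L := gromov d (pi a) (pi b) b) in *.
  destruct (triangle_corners d Hm C nu Z (proj1 Hrh) _ _ _ g0 h g1 H0 Hh H1)
    as [W1 [HW1 [Cpa [Ca Cb]]]].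
  pose proof (vertex_corner_short a b g0 h W1 B L H0 Hh HW1 Cpa HB Hcov ltac:(lra)) as Hp.
  apply (near_segment_closed Hm (pi a) _ H1); intros eps Heps.
  destruct HW1 as [-> | HW1].
  - destruct (near_via_a a b g0 g1 (2 * nu + 2 * kappa) H0 H1 Ca Hp ltac:(lra) eps Heps)
      as [t Ht]; exists t; lra.
  - set (e := Rmin eps (L - gromov d (pi a) a b - 2 * kappa)).
    assert (e <= eps /\ e <= L - gromov d (pi a) a b - 2 * kappa /\ 0 < e)
      by (unfold e, Rmin; destruct Rle_dec; lra).
    destruct (near_via_b a b g1 h W1 B L e H1 Hh HW1 Cb HB Hcov ltac:(lra) ltac:(lra)
                ltac:(lra)) as [t Ht]; exists t; lra.
Qed.

End Projection.

Theorem lemma2p11 (M : Type) (d : M -> M -> R) (C : (M -> Prop) -> Prop)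
  (nu : R) (phi : R -> R) (Z : M -> Prop) (piZ : M -> M) (a b : M)
  (g0 g1 g2 g3 : R -> M) :
  is_metric d -> complete_metric d -> CAT0 d ->
  (forall U, C U -> closed_sub d U /\ convex_sub d U) ->
  0 <= nu -> (forall r, 0 <= r -> 0 <= phi r) ->
  rel_hyp_pair d C nu phi ->
  C Z -> is_proj d Z piZ ->
  geodesic d g0 (piZ a) a -> geodesic d g1 a b ->
  geodesic d g2 b (piZ b) -> geodesic d g3 (piZ b) (piZ a) ->
  d (piZ a) (piZ b) <= phi (nu_prime nu phi) + 2 * nu + 3 * nu_prime nu phi
  \/ quad_slim d (Delta nu phi) (piZ a) a b (piZ b) g0 g1 g2 g3.
Proof.
  intros Hm _ Hc HCU Hnu Hphi Hrh HZ Hpi H0 H1 H2 H3.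
  destruct (Rle_dec (d (piZ a) (piZ b))
              (phi (nu_prime nu phi) + 2 * nu + 3 * nu_prime nu phi)) as [Hle | Hgt];
    [now left | right].
  pose proof (proj2 (HCU Z HZ)) as HconvZ.
  pose proof (kappa_bounds nu phi Hnu Hphi) as [[K0 K1] K2].
  assert (Hfar : 3 * nu + 6 * isect_bound nu phi < d (piZ a) (piZ b))
    by (unfold nu_prime in *; lra).
  (* both projections are close to [[a, b]]; for [piZ b], run the quadrilateral backwards *)
  destruct (proj_near_geodesic d Hm Hc C nu phi Z piZ Hnu Hphi Hrh HZ HconvZ Hpi
              a b g0 g1 g2 g3 H0 H1 H2 H3 Hfar) as [t1 [Ht1 Hd1]].
  destruct (proj_near_geodesic d Hm Hc C nu phi Z piZ Hnu Hphi Hrh HZ HconvZ Hpi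
              b a _ _ _ _ (rev_geo Hm H2) (rev_geo Hm H1) (rev_geo Hm H0) (rev_geo Hm H3)
              ltac:(rewrite (d_sym Hm); lra)) as [t2 [Ht2 Hd2]].
  rewrite (d_sym Hm b a) in *.
  apply (quad_slim_of_near Hm Hc _ _ _ _ g0 g1 g2 g3 t1 (d a b - t2)
           (3 * nu + 4 * isect_bound nu phi)); auto; try lra.
  unfold Delta, nu_dprime, nu_prime in *; lra.
Qed.
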